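(* If $G$ is any blowup of $F_3$, then $\chi(G)\le\lceil\frac54\omega(G)\rceil$.
   Context: $F_3$ is the graph on $\{v_1,\dots,v_6,x,y,z\}$ where $v_1\cdots v_6v_1$ is an induced 6-cycle, $x$ is adjacent to $v_1,v_2,v_3$, $y$ to $v_3,v_4,v_5$, $z$ to $v_5,v_6,v_1$, $\{x,y,z\}$ is a triangle, and there are no other edges. A blowup of $H$ is any graph whose vertex set can be partitioned into $|V(H)|$ (not necessarily non-empty) cliques $Q_v$, $v\in V(H)$, with $Q_u$ complete to $Q_v$ if $uv\in E(H)$ and no edges between $Q_u$ and $Q_v$ if $uv\notin E(H)$. *)

From mathcomp Require Import all_boot.
Set Implicit Arguments. Unset Strict Implicit. Unset Printing Implicit Defensive.

(* Vertices of F_3 as 'I_9 : v1..v6 = 0..5, x = 6, y = 7, z = 8. *)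
Definition F3_edges : seq (nat * nat) :=
  [:: (0,1); (1,2); (2,3); (3,4); (4,5); (5,0);
      (6,0); (6,1); (6,2);
      (7,2); (7,3); (7,4);
      (8,4); (8,5); (8,0);
      (6,7); (7,8); (6,8)].

Definition F3_adj (u v : 'I_9) : bool :=
  ((val u, val v) \in F3_edges) || ((val v, val u) \in F3_edges).

(* Parts may be empty. *)
Definition blowup_of_F3 (T : finType) (e : rel T) : Prop :=
  exists f : T -> 'I_9, forall x y : T,
    e x y = (x != y) && ((f x == f y) || F3_adj (f x) (f y)).

Definition is_clique (T : finType) (e : rel T) (A : {set T}) : bool :=
  [forall x in A, forall y in A, (x != y) ==> e x y].

Definition omega (T : finType) (e : rel T) : nat :=
  \max_(A : {set T} | is_clique e A) #|A|.

Definition colorable (T : finType) (e : rel T) (k : nat) : bool :=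
  [exists c : {ffun T -> 'I_k}, [forall x, forall y, e x y ==> (c x != c y)]].

(* chromatic number: least k <= #|T| with a proper k-colouring
   (for loopless graphs #|T| colours always suffice) *)
Definition chi (T : finType) (e : rel T) : nat :=
  \big[minn/#|T|]_(k < #|T|.+1 | colorable e k) k.

From HB Require Import structures.
From mathcomp Require Import all_boot zify zmodp.
Set Implicit Arguments. Unset Strict Implicit. Unset Printing Implicit Defensive.

(* Write a v for the size of the clique Q_v and w for omega G.  The cliques
   of G covering a triangle of F_3 show a v1 + a v2 + a v3 <= w for each of
   the ten triangles.  Colouring G amounts to giving each v a set of a v
   colours, disjoint for adjacent v, and such weights can be coloured with
   K colours as soon as 5 w <= 4 K: x, y, z get consecutive blocks, the other
   K - (a x + a y + a z) colours are spare, and each cycle vertex first reuses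
   the blocks of the hubs it is not adjacent to.  That the colours fit into
   [0, K) and are disjoint where needed is then a linear consequence of the
   triangle bounds and 5 w <= 4 K. *)

(* Lets [bigD1] split off one term of the minimum defining [chi]. *)
HB.instance Definition _ := SemiGroup.isComLaw.Build nat minn minnA minnC.

Lemma chi_le_card (T : finType) (e : rel T) : chi e <= #|T|.
Proof.
rewrite /chi; elim/big_ind: _ => // [m n le_mT _ | i _]; last exact: leq_ord.
by rewrite geq_min le_mT.
Qed.

Lemma chi_le_colorable (T : finType) (e : rel T) (k : nat) :
  colorable e k -> chi e <= k.
Proof.
move=> col_k; have [le_kT | lt_Tk] := leqP k #|T|; last first.
  exact: leq_trans (chi_le_card e) (ltnW lt_Tk).
have k_lt : k < #|T|.+1 by [].
by rewrite /chi (bigD1 (Ordinal k_lt)) //= geq_minl.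
Qed.

Lemma card_preim_seq (V T : finType) (f : T -> V) (s : seq V) : uniq s ->
  #|[set x | f x \in s]| = \sum_(v <- s) #|f @^-1: [set v]|.
Proof.
elim: s => [_ | v s IHs /= /andP[v_notin_s uniq_s]].
  by rewrite big_nil -(cards0 T); congr #|_|; apply/setP => x; rewrite !inE.
have -> : [set x | f x \in v :: s] = f @^-1: [set v] :|: [set x | f x \in s].
  by apply/setP => x; rewrite !inE.
have disj : [disjoint f @^-1: [set v] & [set x | f x \in s]].
  by apply/pred0P => x /=; rewrite !inE; apply/andP => -[/eqP-> ]; apply/negP.
by rewrite big_cons -IHs // cardsU (disjoint_setI0 disj) cards0 subn0.
Qed.

Section Blowup.

Variables (V T : finType) (h : rel V) (e : rel T) (f : T -> V).
Hypothesis blowupE :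
  forall x y, e x y = (x != y) && ((f x == f y) || h (f x) (f y)).

Lemma blowup_clique_le_omega (s : seq V) :
    uniq s -> all2rel (fun u v => (u == v) || h u v) s ->
  \sum_(v <- s) #|f @^-1: [set v]| <= omega e.
Proof.
move=> uniq_s /allrelP clique_s; rewrite -card_preim_seq //.
apply: leq_bigmax_cond; apply/forallP => x; apply/implyP; rewrite inE => sx.
apply/forallP => y; apply/implyP; rewrite inE => sy.
by apply/implyP => neq_xy; rewrite blowupE neq_xy clique_s.
Qed.

Lemma blowup_colorable (K : nat) (g : V -> nat -> nat) :
    (forall v j, j < #|f @^-1: [set v]| -> g v j < K) ->
    (forall v i j, i < #|f @^-1: [set v]| -> j < #|f @^-1: [set v]| ->
       g v i = g v j -> i = j) ->
    (forall u v i j, h u v -> i < #|f @^-1: [set u]| -> j < #|f @^-1: [set v]| ->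
       g u i != g v j) ->
  colorable e K.
Proof.
move=> g_lt g_inj g_adj.
have rank_lt v x : f x = v -> index x (enum (f @^-1: [set v])) < #|f @^-1: [set v]|.
  by move=> <-; rewrite cardE index_mem mem_enum !inE.
apply/existsP; exists [ffun x => Ordinal (g_lt _ _ (rank_lt _ x erefl))].
apply/forallP => x; apply/forallP => y; apply/implyP.
rewrite blowupE !ffunE -val_eqE /= => /andP[neq_xy /orP[/eqP fxy | hxy]].
- apply: contra neq_xy; rewrite fxy => /eqP/g_inj.
  move=> /(_ (rank_lt _ _ fxy) (rank_lt _ _ erefl)) rank_eq.
  have mem_fy z : f z = f y -> z \in enum (f @^-1: [set f y]).
    by move=> fz; rewrite mem_enum !inE fz.
  by rewrite -(nth_index x (mem_fy x fxy)) rank_eq nth_index ?mem_fy.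
- exact: g_adj hxy (rank_lt _ _ erefl) (rank_lt _ _ erefl).
Qed.

End Blowup.

Definition F3_triangles : seq (seq nat) :=
  [:: [:: 0; 1; 6]; [:: 1; 2; 6]; [:: 2; 3; 7]; [:: 3; 4; 7]; [:: 4; 5; 8];
      [:: 5; 0; 8]; [:: 6; 7; 8]; [:: 6; 7; 2]; [:: 7; 8; 4]; [:: 8; 6; 0]].

(* [inZp] (reduction mod 9) is used rather than [inord] because it computes. *)
Lemma F3_triangles_cliques :
  all (fun t => uniq (map inZp t : seq 'I_9) &&
                all2rel (fun u v => (u == v) || F3_adj u v) (map inZp t))
      F3_triangles.
Proof. by []. Qed.

(* Colours [0, X), [X, X + Y), [X + Y, W) are the blocks of x, y, z and
   [W, K) are spare; t1, t3, t5 are the parts of Q_v1, Q_v3, Q_v5 that do not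
   fit into the spare colours.  These go to the start of y's block, the end of
   z's block and the start of x's block respectively, while the rest of Q_v1,
   Q_v3, Q_v5 takes spare colours upwards from W.  Each of v2, v4, v6 fills what
   is left of the two blocks it may use, then takes spare colours downwards
   from K - 1. *)
Definition F3_color (a : nat -> nat) (K v j : nat) : nat :=
  let X := a 6 in let Y := a 7 in let Z := a 8 in
  let W := X + Y + Z in let R := K - W in
  let t1 := a 0 - R in let t3 := a 2 - R in let t5 := a 4 - R in
  match v with
  | 0 => if j < t1 then X + j else W + (j - t1)
  | 1 => if j < (Y - t1) + (Z - t3) then X + t1 + j
         else K.-1 - (j - ((Y - t1) + (Z - t3)))
  | 2 => if j < t3 then W - t3 + j else W + (j - t3)
  | 3 => if j < Z - t3 then X + Y + j
         else if j < (Z - t3) + (X - t5) then t5 + (j - (Z - t3))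
         else K.-1 - (j - ((Z - t3) + (X - t5)))
  | 4 => if j < t5 then j else W + (j - t5)
  | 5 => if j < X - t5 then t5 + j
         else if j < (X - t5) + (Y - t1) then X + t1 + (j - (X - t5))
         else K.-1 - (j - ((X - t5) + (Y - t1)))
  | 6 => j
  | 7 => X + j
  | _ => X + Y + j
  end.

Section F3Coloring.

Variables (a : nat -> nat) (w K : nat).
Hypothesis triangles_le : all (fun t => \sum_(v <- t) a v <= w) F3_triangles.
Hypothesis K_ge : 5 * w <= 4 * K.

Ltac solve_color :=
  move: triangles_le K_ge; rewrite /F3_color /= !big_cons !big_nil !addn0;
  move=> /and5P[? ? ? ? /and5P[? ? ? ? /and3P[? ? _]]] ?;
  repeat case: ifP => ?; lia.

Lemma F3_color_lt v j : v < 9 -> j < a v -> F3_color a K v j < K.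
Proof. by case: v => [|[|[|[|[|[|[|[|[|v]]]]]]]]] //= _ ?; solve_color. Qed.

Lemma F3_color_inj v i j : v < 9 -> i < a v -> j < a v ->
  F3_color a K v i = F3_color a K v j -> i = j.
Proof. by case: v => [|[|[|[|[|[|[|[|[|v]]]]]]]]] //= _ ? ?; solve_color. Qed.

Lemma F3_color_edge m n i j : (m, n) \in F3_edges -> i < a m -> j < a n ->
  F3_color a K m i != F3_color a K n j.
Proof.
rewrite !inE => mn_edge; repeat case/orP: mn_edge => mn_edge.
all: by case/eqP: mn_edge => -> -> ? ?; apply/eqP; solve_color.
Qed.

End F3Coloring.

Theorem theorem5p7 (T : finType) (e : rel T) :
  blowup_of_F3 e -> chi e <= (5 * omega e + 3) %/ 4.
Proof.
move=> [f blowupE].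
pose a n := #|f @^-1: [set inZp n : 'I_9]|.
have a_val (v : 'I_9) : a v = #|f @^-1: [set v]| by rewrite /a valZpK.
have triangles_le : all (fun t => \sum_(v <- t) a v <= omega e) F3_triangles.
  apply/allP => t /(allP F3_triangles_cliques) /andP[uniq_t clique_t].
  by have := blowup_clique_le_omega blowupE uniq_t clique_t; rewrite big_map.
set K := (5 * omega e + 3) %/ 4.
have K_ge : 5 * omega e <= 4 * K by rewrite /K; lia.
apply/chi_le_colorable/(blowup_colorable blowupE (g := fun v => F3_color a K v)).
- move=> v j; rewrite -a_val; exact: (F3_color_lt triangles_le K_ge (ltn_ord v)).
- move=> v i j; rewrite -!a_val; exact: (F3_color_inj triangles_le K_ge (ltn_ord v)).
- move=> u v i j; rewrite /F3_adj -!a_val => /orP[uv | vu] ui vj.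
  + exact: (F3_color_edge triangles_le K_ge uv ui vj).
  + rewrite eq_sym; exact: (F3_color_edge triangles_le K_ge vu vj ui).
Qed.
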